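(* Let $V:\mathbb{R}^d\to\mathbb{R}^n$ be continuously differentiable and $h$-homogeneous, and suppose there are constants $C,\ell>0$ with $\Vert V(\theta)\Vert_\mu\le C\Vert\theta\Vert^\ell$ for all $\theta$. Let $B=\frac{\Vert (I-\gamma P)V^*\Vert_\mu}{1-\gamma}=\frac{\Vert R\Vert_\mu}{1-\gamma}$. Then for any initial condition $\theta(0)=\theta_0$, if $\theta(t)$ follows the dynamics $$\dot\theta=-\nabla V(\theta)^T A\,(V(\theta)-V^* ),$$ we have $\liminf_{t\to\infty}\Vert V(\theta(t))\Vert_\mu\le B$.
   Context: A Markov reward process has finite state space $\mathcal{S}$ with $|\mathcal{S}|=n$, transition matrix $P$ (entries $P(s'|s)$) defining an irreducible, aperiodic Markov chain with stationary distribution $\mu$, a finite reward function $r(s,s')$, and discount factor $\gamma\in[0,1)$. Let $R\in\mathbb{R}^n$ be $R(s)=\mathbb{E}_{s'\sim P(\cdot|s)}[r(s,s')]$, and let $V^*\in\mathbb{R}^n$ be the true value function, the unique solution of $V^*=R+\gamma PV^*$. Let $D_\mu$ be the diagonal matrix with $\mu$ on the diagonal and $A:=D_\mu(I-\gamma P)$. For $x\in\mathbb{R}^n$, $\Vert x\Vert_\mu^2=x^TD_\mu x=\sum_s\mu(s)x_s^2$; $\Vert\theta\Vert$ is the Euclidean norm. $\nabla V(\theta)$ denotes the $n\times d$ Jacobian of $V$. A differentiable function $f:\mathbb{R}^k\to\mathbb{R}^m$ is called $h$-homogeneous (for $h\in\mathbb{R}$) if $f(x)=h\,\nabla f(x)\,x$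 for all $x$. *)

From HB Require Import structures.
From mathcomp Require Import all_boot all_order all_algebra.
From mathcomp Require Import all_classical all_reals all_analysis.
Set Implicit Arguments. Unset Strict Implicit. Unset Printing Implicit Defensive.
Import Order.TTheory GRing.Theory Num.Theory.
Import numFieldNormedType.Exports.
Local Open Scope ring_scope.

(* Convention: vectors of R^n / R^d are ROW vectors 'rV[R]_n. States are 'I_n,
   P s s' = P(s'|s). *)

Section Defs.
Context {R : realType}.

Definition stochastic n (P : 'M[R]_n) :=
  (forall s s', 0 <= P s s') /\ (forall s, \sum_(s' < n) P s s' = 1).

Definition irreducible n (P : 'M[R]_n) :=
  forall s s' : 'I_n, exists k : nat, 0 < (P ^+ k) s s'.

(* the period of state s (gcd of {k >= 1 | P^k(s,s) > 0}) equals 1 *)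
Definition aperiodic n (P : 'M[R]_n) :=
  forall s : 'I_n, forall p : nat,
    (forall k : nat, (0 < k)%N -> 0 < (P ^+ k) s s -> (p %| k)%N) -> p = 1%N.

Definition stationary n (P : 'M[R]_n) (mu : 'rV[R]_n) :=
  (forall s, 0 <= mu 0 s) /\ \sum_(s < n) mu 0 s = 1 /\ mu *m P = mu.

Definition mu_norm n (mu x : 'rV[R]_n) : R :=
  Num.sqrt (\sum_(s < n) mu 0 s * x 0 s ^+ 2).

Definition euclid_norm d (x : 'rV[R]_d) : R :=
  Num.sqrt (\sum_(j < d) x 0 j ^+ 2).

Definition exp_reward n (P : 'M[R]_n) (r : 'I_n -> 'I_n -> R) : 'rV[R]_n :=
  \row_s \sum_(s' < n) P s s' * r s s'.

Definition Amat n (P : 'M[R]_n) (mu : 'rV[R]_n) (gamma : R) : 'M[R]_n :=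
  diag_mx mu *m (1%:M - gamma *: P).

(* The n x d Jacobian (nabla V)(theta), entry (i,j) = dV_i/dtheta_j
   (mathcomp's 'J is its transpose, d x n). *)
Definition Jac d n (V : 'rV[R]_d -> 'rV[R]_n) (theta : 'rV[R]_d) : 'M[R]_(n, d) :=
  (jacobian V theta)^T.

Definition C1 d n (V : 'rV[R]_d -> 'rV[R]_n) :=
  (forall theta, differentiable V theta) /\ continuous (Jac V).

(* h-homogeneous: V(x) = h * (nabla V(x)) x   (column form), i.e. in row form
   V x = h *: (x *m (nabla V x)^T) *)
Definition homogeneous d n (h : R) (V : 'rV[R]_d -> 'rV[R]_n) :=
  forall x, V x = h *: (x *m (Jac V x)^T).

End Defs.

(* Euler's identity grad V(theta) theta = V(theta) / h turns the derivative of |theta|^2 along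
   the flow into -(2/h) <V, (I - gamma P) V - R>_mu.  Since P is a contraction for the mu-norm
   (Jensen on the rows of P plus stationarity of mu), this inner product is at least
   ((1 - gamma)^2 |V|_mu^2 - |R|_mu^2) / (2 (1 - gamma)).  So if |V(theta(t))|_mu stayed above
   B + e for all large t, |theta(t)|^2 would decrease at a rate bounded away from 0, which is
   impossible for a nonnegative quantity.  For h <= 0, homogeneity forces V = 0. *)

From HB Require Import structures.
From mathcomp Require Import all_boot all_order all_algebra.
From mathcomp Require Import all_classical all_reals all_analysis.
From mathcomp Require Import ring lra.
Import Order.TTheory GRing.Theory Num.Theory.
Import numFieldNormedType.Exports.
Local Open Scope classical_set_scope.
Local Open Scope ring_scope.

Section RowCalculus.
Context {R : realType}.

Lemma is_derive_row_coord {m} {F : R -> 'rV[R]_m} {t : R} {D : 'rV[R]_m} k :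
  is_derive t 1 F D -> is_derive t 1 (fun s => F s 0 k) (D 0 k).
Proof.
move=> dF; have F_derivable : derivable F t 1 by case: dF.
rewrite -(@derive_val _ _ _ _ _ _ _ dF) derive_mx // mxE.
by apply: derivableP; move/derivable_mxP : F_derivable; apply.
Qed.

Lemma is_derive_sum_sqr {m} {F : R -> 'rV[R]_m} {t : R} {D : 'rV[R]_m} :
  is_derive t 1 F D ->
  is_derive t 1 (fun s => \sum_k F s 0 k ^+ 2) (2 * \sum_k F t 0 k * D 0 k).
Proof.
move=> dF.
have -> : (fun s => \sum_k F s 0 k ^+ 2) = \sum_k (fun s => F s 0 k) ^+ 2.
  by apply/funext => s; rewrite fct_sumE.
apply: is_derive_eq; first by apply: is_derive_sum => k; exact/is_deriveX/is_derive_row_coord.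
by rewrite mulr_sumr; apply: eq_bigr => k _; rewrite expr1 mulrA.
Qed.

Lemma is_derive_along_ray {d n} {V : 'rV[R]_d -> 'rV[R]_n} {x : 'rV[R]_d} {s : R} :
  differentiable V (s *: x) ->
  is_derive s 1 (fun u : R => V (u *: x)) (x *m jacobian V (s *: x)).
Proof.
move=> dV.
have dVx : is_diff s (V \o ( *:%R^~ x)) ('d V (s *: x) \o ( *:%R^~ x)).
  by apply: is_diff_comp; apply: differentiableP.
have Vx_diff : differentiable (V \o ( *:%R^~ x)) s by case: dVx.
apply: DeriveDef; first exact: diff_derivable.
by rewrite deriveE // (diff_val (is_diff_def:=dVx)) /= scale1r -deriveEjacobian // deriveE.
Qed.

End RowCalculus.

Lemma sum_sqr_row_le0_eq0 {R : realDomainType} {m} (v : 'rV[R]_m) :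
  \sum_k v 0 k ^+ 2 <= 0 -> v = 0.
Proof.
move=> le0; apply/rowP => k; rewrite mxE; apply/eqP.
rewrite -sqrf_eq0 eq_le sqr_ge0 andbT; apply: le_trans le0.
by rewrite (bigD1 k) //= lerDl sumr_ge0 // => j _; exact: sqr_ge0.
Qed.

Lemma sum_mul_row {R : pzRingType} {m} (x y : 'rV[R]_m) :
  \sum_j x 0 j * y 0 j = (x *m y^T) 0 0.
Proof. by rewrite mxE; apply: eq_bigr => j _; rewrite mxE. Qed.

Lemma sqr_mean_le {R : realFieldType} {I : finType} (p v : I -> R) :
  (forall i, 0 <= p i) -> \sum_i p i = 1 ->
  (\sum_i v i * p i) ^+ 2 <= \sum_i v i ^+ 2 * p i.
Proof.
move=> p_ge0 p_sum1; set m := \sum_i v i * p i.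
have : 0 <= \sum_i (v i - m) ^+ 2 * p i.
  by apply: sumr_ge0 => i _; rewrite mulr_ge0 ?sqr_ge0 ?p_ge0.
have -> : \sum_i (v i - m) ^+ 2 * p i =
          \sum_i v i ^+ 2 * p i - 2 * m * m + m ^+ 2 * \sum_i p i.
  rewrite (eq_bigr (fun i => v i ^+ 2 * p i - 2 * m * (v i * p i) + m ^+ 2 * p i)).
    by rewrite !big_split /= sumrN -!mulr_sumr.
  by move=> i _; ring.
by rewrite p_sum1; lra.
Qed.

Definition mu_dot {R : realType} {n} (mu x y : 'rV[R]_n) : R :=
  \sum_k mu 0 k * (x 0 k * y 0 k).

Lemma mu_normE {R : realType} {n} (mu x : 'rV[R]_n) : mu_norm mu x = Num.sqrt (mu_dot mu x x).
Proof. by rewrite /mu_norm /mu_dot; under eq_bigr do rewrite expr2. Qed.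

Lemma mu_norm0 {R : realType} {n} (mu : 'rV[R]_n) : mu_norm mu 0 = 0.
Proof. by rewrite /mu_norm big1 ?sqrtr0 // => k _; rewrite mxE expr0n mulr0. Qed.

Lemma mu_dot_mulmx {R : realType} {n} (mu x y : 'rV[R]_n) :
  mu_dot mu x y = (x *m (y *m diag_mx mu)^T) 0 0.
Proof. by rewrite -sum_mul_row; apply: eq_bigr => k _; rewrite mul_mx_diag mxE; ring. Qed.

Section StationaryChain.
Context {R : realType} {n : nat} {P : 'M[R]_n} {mu : 'rV[R]_n}.
Hypotheses (stoP : stochastic P) (statmu : stationary P mu).

Lemma mu_dot_ge0 x : 0 <= mu_dot mu x x.
Proof.
by case: statmu => mu_ge0 _; apply: sumr_ge0 => k _; rewrite -expr2 mulr_ge0 ?sqr_ge0.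
Qed.

Lemma stationary_sum_mulmx_tr (w : 'rV[R]_n) :
  \sum_k mu 0 k * (w *m P^T) 0 k = \sum_k mu 0 k * w 0 k.
Proof.
case: statmu => _ [_ muP].
rewrite -[in RHS]muP; under eq_bigr do rewrite mxE mulr_sumr.
rewrite exchange_big /=; apply: eq_bigr => i _; rewrite mxE mulr_suml.
by apply: eq_bigr => k _; rewrite !mxE; ring.
Qed.

Lemma mu_dot_mulmx_tr_le v : mu_dot mu v (v *m P^T) <= mu_dot mu v v.
Proof.
have [P_ge0 P_sum1] := stoP; have [mu_ge0 _] := statmu.
pose v2 := map_mx (fun a => a ^+ 2) v.
have am_gm k : v 0 k * (v *m P^T) 0 k <= (v2 0 k + (v2 *m P^T) 0 k) / 2.
  have jensen : (v *m P^T) 0 k ^+ 2 <= (v2 *m P^T) 0 k.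
    rewrite !mxE; under eq_bigr do rewrite !mxE.
    under [X in _ <= X]eq_bigr do rewrite !mxE.
    exact: sqr_mean_le.
  have := sqr_ge0 (v 0 k - (v *m P^T) 0 k); rewrite [v2 0 k]mxE; nra.
apply: (@le_trans _ _ (\sum_k mu 0 k * ((v2 0 k + (v2 *m P^T) 0 k) / 2))).
  by apply: ler_sum => k _; apply: ler_wpM2l.
have -> : \sum_k mu 0 k * ((v2 0 k + (v2 *m P^T) 0 k) / 2) =
          (\sum_k mu 0 k * v2 0 k + \sum_k mu 0 k * (v2 *m P^T) 0 k) / 2.
  by rewrite mulrDl !mulr_suml -big_split; apply: eq_bigr => k _ /=; ring.
rewrite stationary_sum_mulmx_tr.
have -> : \sum_k mu 0 k * v2 0 k = mu_dot mu v v.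
  by apply: eq_bigr => k _; rewrite mxE expr2.
lra.
Qed.

Lemma mu_dot_residualE (gamma : R) (v y w : 'rV[R]_n) :
  mu_dot mu v (v - gamma *: y - w) = mu_dot mu v v - gamma * mu_dot mu v y - mu_dot mu v w.
Proof.
rewrite /mu_dot mulr_sumr -!sumrB; apply: eq_bigr => k _.
by rewrite !mxE; ring.
Qed.

Lemma mu_dot_am_gm (lambda : R) (v w : 'rV[R]_n) :
  2 * lambda * mu_dot mu v w <= lambda ^+ 2 * mu_dot mu v v + mu_dot mu w w.
Proof.
have [mu_ge0 _] := statmu.
rewrite /mu_dot !mulr_sumr -big_split /=; apply: ler_sum => k _.
have := mulr_ge0 (mu_ge0 k) (sqr_ge0 (lambda * v 0 k - w 0 k)); nra.
Qed.

Lemma mu_dot_residual_ge (gamma : R) (v w : 'rV[R]_n) : 0 <= gamma < 1 ->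
  (1 - gamma) ^+ 2 * mu_dot mu v v - mu_dot mu w w <=
  2 * (1 - gamma) * mu_dot mu v (v - gamma *: (v *m P^T) - w).
Proof.
case/andP => gamma_ge0 gamma_lt1; set lambda := 1 - gamma.
have lambda_gt0 : 0 < lambda by rewrite subr_gt0.
have contraction : 2 * lambda * (gamma * mu_dot mu v (v *m P^T)) <=
                   2 * lambda * (gamma * mu_dot mu v v).
  apply: ler_wpM2l; first by rewrite mulr_ge0 ?ltW.
  exact/ler_wpM2l/mu_dot_mulmx_tr_le.
have := mu_dot_am_gm lambda v w.
rewrite mu_dot_residualE /lambda in contraction *; nra.
Qed.

Lemma mu_dot_residual_ge_of_norm_gt (gamma e : R) (v w : 'rV[R]_n) : 0 <= gamma < 1 -> 0 < e ->
  mu_norm mu w / (1 - gamma) + e < mu_norm mu v ->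
  (1 - gamma) * e ^+ 2 <= 2 * mu_dot mu v (v - gamma *: (v *m P^T) - w).
Proof.
move=> gamma01 e_gt0; have := @mu_dot_residual_ge gamma v w gamma01.
have /andP[_ gamma_lt1] := gamma01; set lambda := 1 - gamma.
have lambda_gt0 : 0 < lambda by rewrite subr_gt0.
rewrite !mu_normE; set G := mu_dot mu v (v - _ - w) => resG.
have := sqr_sqrtr (mu_dot_ge0 v); have := sqrtr_ge0 (mu_dot mu v v).
have := sqr_sqrtr (mu_dot_ge0 w); have := sqrtr_ge0 (mu_dot mu w w).
set a := Num.sqrt (mu_dot mu v v); set b := Num.sqrt (mu_dot mu w w).
move=> b_ge0 b2 a_ge0 a2.
rewrite -(ltr_pM2l lambda_gt0) mulrDr mulrCA mulfV ?gt_eqF // mulr1 => gap.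
have sq_gap : b ^+ 2 + (lambda * e) ^+ 2 <= (lambda * a) ^+ 2.
  have c_gt0 := mulr_gt0 lambda_gt0 e_gt0; set c := lambda * e in gap c_gt0 *.
  have := mulr_ge0 b_ge0 (ltW c_gt0).
  have : 0 <= (lambda * a - (b + c)) * (lambda * a + (b + c)).
    by rewrite mulr_ge0 // ?subr_ge0 ?ltW //; lra.
  nra.
rewrite -(ler_pM2l lambda_gt0); move: sq_gap resG; rewrite !exprMn a2 b2; nra.
Qed.

End StationaryChain.

Section Homogeneous.
Context {R : realType} {d n : nat} {h : R} {V : 'rV[R]_d -> 'rV[R]_n}.
Hypothesis homV : homogeneous h V.

Lemma homogeneousE x : V x = h *: (x *m jacobian V x).
Proof. by rewrite {1}homV /Jac trmxK. Qed.

Lemma homogeneous0 : V 0 = 0.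
Proof. by rewrite homogeneousE mul0mx scaler0. Qed.

Hypothesis dV : forall x, differentiable V x.

Lemma homogeneous_neg_sum_sqr_nincr x (s : R) : h < 0 -> 0 < s <= 1 ->
  \sum_k V x 0 k ^+ 2 <= \sum_k V (s *: x) 0 k ^+ 2.
Proof.
move=> h_lt0 s01; pose u (s : R) := \sum_k V (s *: x) 0 k ^+ 2.
have du (t : R) : is_derive t 1 u (2 * \sum_k V (t *: x) 0 k * (x *m jacobian V (t *: x)) 0 k).
  exact/is_derive_sum_sqr/is_derive_along_ray.
have Euler (t : R) : t != 0 -> x *m jacobian V (t *: x) = (h * t)^-1 *: V (t *: x).
  move=> t_neq0; rewrite [in RHS]homogeneousE -scalemxAl !scalerA mulVf ?scale1r //.
  by rewrite mulf_neq0 // lt_eqF.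
rewrite -{1}[x]scale1r -/(u 1) -/(u s).
apply: (@ler0_derive1_le_oc _ u 0 1) => //.
- move=> t; rewrite in_itv /= => /andP[t_gt0 _].
  rewrite derive1E (@derive_val _ _ _ _ _ _ _ (du t)) Euler ?gt_eqF //.
  have -> : \sum_k V (t *: x) 0 k * ((h * t)^-1 *: V (t *: x)) 0 k = (h * t)^-1 * u t.
    by rewrite /u mulr_sumr; apply: eq_bigr => k _; rewrite mxE; ring.
  rewrite pmulr_rle0 // nmulr_rle0 ?invr_lt0 ?nmulr_rlt0 //.
  by apply: sumr_ge0 => k _; apply: sqr_ge0.
- apply: continuous_subspaceT => t; apply: differentiable_continuous.
  by apply/derivable1_diffP; case: (du t).
- by rewrite in_itv /= ltr01 lexx.
- by case/andP: s01.
Qed.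

Lemma homogeneous_nonpos_eq0 x : h <= 0 -> V x = 0.
Proof.
rewrite le_eqVlt => /orP[/eqP h0 | h_lt0]; first by rewrite homogeneousE h0 scale0r.
pose u (s : R) := \sum_k V (s *: x) 0 k ^+ 2.
have u_cont : u s @[s --> 0^'+] --> u 0.
  apply: cvg_at_right_filter; apply: differentiable_continuous; apply/derivable1_diffP.
  by case: (is_derive_sum_sqr (is_derive_along_ray (dV ((0 : R) *: x)))).
have u0 : u 0 = 0.
  by rewrite /u scale0r homogeneous0; apply: big1 => k _; rewrite mxE expr0n.
have : \sum_k V x 0 k ^+ 2 <= u 0.
  rewrite -(cvg_lim _ u_cont) //; apply: limr_ge; first by apply/cvg_ex; exists (u 0).
  near=> s; apply: homogeneous_neg_sum_sqr_nincr => //; apply/andP; split => //.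
  by near: s; apply: nbhs_right_le; rewrite ltr01.
by rewrite u0; apply: sum_sqr_row_le0_eq0.
Unshelve. all: end_near.
Qed.

End Homogeneous.

Section GradientFlow.
Context {R : realType} {n d : nat} {P : 'M[R]_n} {mu : 'rV[R]_n} {gamma : R}.
Context {Vs rew : 'rV[R]_n}.
Hypothesis bellman : Vs = rew + gamma *: (Vs *m P^T).

Lemma Amat_bellman_residual (v : 'rV[R]_n) :
  (v - Vs) *m (Amat P mu gamma)^T = (v - gamma *: (v *m P^T) - rew) *m diag_mx mu.
Proof.
rewrite /Amat trmx_mul tr_diag_mx mulmxA; congr (_ *m _).
rewrite linearB /= tr_scalar_mx linearZ /= mulmxBr mulmx1 -scalemxAr mulmxBl.
by rewrite {1}bellman scalerBr opprB opprD !addrA subrK addrAC.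
Qed.

Lemma gradient_flow_radial_speed {h : R} {V : 'rV[R]_d -> 'rV[R]_n} (x : 'rV[R]_d) :
  homogeneous h V -> h != 0 ->
  \sum_j x 0 j * (- ((V x - Vs) *m (Amat P mu gamma)^T *m Jac V x)) 0 j =
  - h^-1 * mu_dot mu (V x) (V x - gamma *: (V x *m P^T) - rew).
Proof.
move=> homV h_neq0.
have Euler : x *m (Jac V x)^T = h^-1 *: V x.
  by rewrite [in RHS]homV scalerA mulVf ?scale1r.
rewrite sum_mul_row Amat_bellman_residual linearN /= trmx_mul mulmxN mulmxA Euler.
by rewrite -scalemxAl mu_dot_mulmx !mxE mulNr.
Qed.

Lemma gradient_flow_sqr_norm_derive_le {h : R} {V : 'rV[R]_d -> 'rV[R]_n}
    (x : 'rV[R]_d) (e : R) :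
  stochastic P -> stationary P mu -> 0 <= gamma < 1 -> homogeneous h V -> 0 < h -> 0 < e ->
  mu_norm mu rew / (1 - gamma) + e < mu_norm mu (V x) ->
  2 * \sum_j x 0 j * (- ((V x - Vs) *m (Amat P mu gamma)^T *m Jac V x)) 0 j <=
  - ((1 - gamma) * e ^+ 2 / h).
Proof.
move=> stoP statmu gamma01 homV h_gt0 e_gt0 far.
rewrite (gradient_flow_radial_speed _ homV) ?gt_eqF // mulNr mulrN mulrCA lerN2 [_ / h]mulrC.
rewrite ler_pM2l ?invr_gt0 //.
exact: (mu_dot_residual_ge_of_norm_gt stoP statmu _ _ _ _ gamma01 e_gt0 far).
Qed.

End GradientFlow.

Lemma exists_lt0_of_derive_le_neg {R : realType} (f f' : R -> R) (T c : R) : 0 < c ->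
  (forall t, T <= t -> is_derive t 1 f (f' t)) -> (forall t, T <= t -> f' t <= - c) ->
  exists t, T <= t /\ f t < 0.
Proof.
move=> c_gt0 df df_le; pose t1 := T + `|f T| / c + 1.
have fT_c_ge0 : 0 <= `|f T| / c by rewrite divr_ge0 // ltW.
have T_lt_t1 : T < t1 by rewrite /t1; lra.
have df_in t : t \in `]T, t1[ -> is_derive t 1 f (f' t).
  by move=> t_in; apply: df; rewrite ltW // (itvP t_in).
have f_cont : {within `[T, t1], continuous f}.
  apply: continuous_in_subspaceT => t; rewrite inE /= in_itv /= => /andP[T_le_t _].
  apply: differentiable_continuous; apply/derivable1_diffP; by case: (df t T_le_t).
have [xi xi_in mvt] := MVT T_lt_t1 df_in f_cont.
exists t1; split; first exact: ltW.
have : f' xi * (t1 - T) <= - c * (t1 - T).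
  by apply: ler_wpM2r; [rewrite subr_ge0 ltW | apply: df_le; rewrite ltW // (itvP xi_in)].
have -> : - c * (t1 - T) = - `|f T| - c by rewrite /t1; field; rewrite gt_eqF.
rewrite -mvt; have := ler_norm (f T); lra.
Qed.

Lemma limf_einf_pinfty_le {R : realType} (f : R -> R) (B : R) :
  (forall e, 0 < e -> forall M, exists t, M < t /\ f t <= B + e) ->
  (limf_einf (fun t => (f t)%:E) (+oo%R : set_system R) <= B%:E)%E.
Proof.
move=> near_B; rewrite limf_einfE; apply: ge_ereal_sup => _ [S [M [_ MS]] <-].
apply/lee_addgt0Pr => e e_gt0; have [t [Mt ft]] := near_B e e_gt0 M.
apply: le_trans (ereal_inf_lbound _) _; first by exists t; [exact: MS | reflexivity].
by rewrite -EFinD lee_fin.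
Qed.

Theorem theorem1 (R : realType) (n d : nat) (P : 'M[R]_n) (mu : 'rV[R]_n)
  (r : 'I_n -> 'I_n -> R) (gamma : R) (Vstar : 'rV[R]_n)
  (V : 'rV[R]_d -> 'rV[R]_n) (h C l : R) (theta0 : 'rV[R]_d)
  (theta : R -> 'rV[R]_d) :
  stochastic P -> irreducible P -> aperiodic P -> stationary P mu ->
  0 <= gamma < 1 ->
  Vstar = exp_reward P r + gamma *: (Vstar *m P^T) ->
  C1 V -> homogeneous h V ->
  0 < C -> 0 < l ->
  (forall th, mu_norm mu (V th) <= C * powR (euclid_norm th) l) ->
  theta 0 = theta0 ->
  theta x @[x --> 0^'+] --> theta0 ->
  (forall t : R, 0 < t ->
     is_derive t 1 theta
       (- ((V (theta t) - Vstar) *m (Amat P mu gamma)^T *m Jac V (theta t)))) ->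
  (limf_einf (fun t : R => (mu_norm mu (V (theta t)))%:E) (+oo%R : set_system R)
     <= (mu_norm mu (exp_reward P r) / (1 - gamma))%:E)%E.
Proof.
move=> stoP _ _ statmu gamma01 bellman [dV _] homV _ _ _ _ _ flow.
have lambda_gt0 : 0 < 1 - gamma by rewrite subr_gt0; case/andP: gamma01.
apply: limf_einf_pinfty_le => e e_gt0 M.
have [h_le0 | h_gt0] := lerP h 0.
  exists (M + 1); rewrite ltrDl ltr01 (homogeneous_nonpos_eq0 homV dV _ h_le0) mu_norm0.
  by split=> //; rewrite addr_ge0 ?divr_ge0 ?sqrtr_ge0 ?ltW.
apply/not_existsP => far.
have c_gt0 : 0 < (1 - gamma) * e ^+ 2 / h by rewrite !mulr_gt0 ?exprn_gt0 ?invr_gt0.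
have T_gt0 : 0 < `|M| + 1 by rewrite ltr_pwDr.
suff [t [_]] : exists t, `|M| + 1 <= t /\ \sum_j theta t 0 j ^+ 2 < 0.
  by rewrite ltNge sumr_ge0 // => j _; exact: sqr_ge0.
apply: (exists_lt0_of_derive_le_neg _ _ _ _ c_gt0
  (fun t Tt => is_derive_sum_sqr (flow t (lt_le_trans T_gt0 Tt)))) => t Tt.
apply: (gradient_flow_sqr_norm_derive_le bellman) => //.
rewrite ltNge; apply/negP => close; apply: (far t); split=> //.
by apply: lt_le_trans Tt; rewrite (le_lt_trans (ler_norm M)) // ltrDl.
Qed.
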